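(* Let $\mathcal V$ be a finite set of agents, $\mathcal L\subseteq\mathcal V$ a set of leaders, $\overline\pi\in\mathbb N_{\geq 1}$, and $\delta\geq 0$ an integer bound on communication delays. For each time $t\in\mathbb N$ let $\mathcal N_i^t\subseteq\mathcal V$ be the in-neighborhood of agent $i$ (with $i\in\mathcal N_i^t$), and let $\mathcal E^t=\{(j,i): j\in\mathcal N_i^t\}$. Hierarchy levels $\pi_i^t\in\{0,1,\dots,\overline\pi\}$ evolve as follows: $\pi_\ell^t=0$ for all $t$ and all $\ell\in\mathcal L$; for each follower $i\in\mathcal V\setminus\mathcal L$, $\pi_i^0=\overline\pi$ and for $t\geq 1$ $$\pi_i^t=\min\Bigl\{\overline\pi,\;1+\min_{j\in\mathcal N_i^t\setminus\{i\}}\pi_j^{\,t-\delta^t_{j|i}-1}\Bigr\},$$ where $\delta^t_{j|i}\in\{0,\dots,\delta\}$ is the delay with which $i$ receives $j$'s information at time $t$ (with $t-\delta^t_{j|i}-1\geq 0$), and the inner minimum over an empty set is $+\infty$. Let $D\in\{0,1,\dots,\overline\pi\}$ and let $\bar t\geq(\delta+1)D$ be such that $\mathcal E^s=\mathcal E^{\bar t}$ for all $s$ with $\bar t-(\delta+1)D\leq s\leq\bar t$. Then for every agent $i\in\mathcal V$, $$\pi_i^{\bar t}=D_i^{\mathcal E^{\bar t}}\quad\text{if } D_i^{\mathcal E^{\bar t}}\leq D,\qquad \pi_i^{\bar t}>D\quad\text{otherwise}.$$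
   Context: For a directed graph $(\mathcal V,\mathcal E)$ whose edge $(j,i)\in\mathcal E$ means that $j$ is an in-neighbor of $i$ (i.e., information flows from $j$ to $i$), the graph distance from a leader $\ell$ to agent $i$ is the smallest $\eta\geq 0$ such that there is a sequence $\ell=j_0,j_1,\dots,j_\eta=i$ with $(j_{k},j_{k+1})\in\mathcal E$ for all $k<\eta$ (it is $+\infty$ if no such sequence exists, and $0$ iff $i=\ell$). The exact hierarchy level of $i$ with respect to $\mathcal E$ is $D_i^{\mathcal E}=\min\{\overline\pi,\ \min_{\ell\in\mathcal L}\operatorname{dist}^{\mathcal E}(\ell,i)\}$. (In the paper's application the connectivity is proximity-based and hence symmetric, so the direction of paths is immaterial there.) *)

From mathcomp Require Import all_boot.
Set Implicit Arguments. Unset Strict Implicit. Unset Printing Implicit Defensive.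

Definition edge_rel (V : finType) (N : nat -> V -> {set V}) (t : nat) : rel V :=
  fun j i => j \in N t i.

Definition walk_len (V : finType) (e : rel V) (x y : V) (eta : nat) : bool :=
  [exists p : eta.-tuple V, path e x p && (last x p == y)].

Definition leader_reach (V : finType) (e : rel V) (L : {set V}) (i : V) (eta : nat) : bool :=
  [exists l in L, walk_len e l i eta].

(* Exact hierarchy level  D_i^E = min{ pibar, min_{l in L} dist^E(l,i) }.
   Since dist is the least eta admitting a walk, and only values <= pibar
   matter in the outer min, this is the min of pibar and all eta <= pibar
   for which some leader reaches i in eta steps. *)
Definition hier_level (V : finType) (e : rel V) (L : {set V}) (pibar : nat) (i : V) : nat :=
  \big[minn/pibar]_(eta < pibar.+1 | leader_reach e L i eta) (eta : nat).

From mathcomp Require Import all_boot all_order zify.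
Set Implicit Arguments. Unset Strict Implicit. Unset Printing Implicit Defensive.
Import Order.TTheory.

(* Induction on d: once the edge set has been constant for (delta+1) d steps,
   every agent at level at most d has settled to its exact level, and every
   other agent has a level above d.  Information travels one hop in at most
   delta + 1 steps, so each further block of delta + 1 static steps pushes
   this frontier one hop further: a follower at level d+1 hears its BFS parent
   (already settled at level d), while no neighbour can report a level below
   the neighbour's own exact level. *)

Section Walks.
Variables (V : finType) (e : rel V).

Lemma walk_len0 x y : walk_len e x y 0 = (x == y).
Proof.
apply/existsP/eqP => [[p]|<-]; first by rewrite tuple0 => /eqP.
by exists [tuple]; rewrite /= eqxx.
Qed.

Lemma walk_lenSP x y n :
  reflect (exists2 z, walk_len e x z n & e z y) (walk_len e x y n.+1).
Proof.
apply: (iffP existsP) => [[[p sz_p]] /= /andP [e_p /eqP <-{y}]|].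
  move: sz_p e_p; case/lastP: p => [//|q a].
  rewrite size_rcons eqSS rcons_path last_rcons => sz_q /andP [e_q e_a].
  exists (last x q) => //.
  by rewrite /walk_len; apply/existsP; exists (Tuple sz_q); rewrite /= e_q eqxx.
case=> z /existsP [p /andP [e_p /eqP p_z]] e_zy.
have sz : size (rcons p y) == n.+1 by rewrite size_rcons size_tuple.
by exists (Tuple sz); rewrite /= rcons_path e_p p_z e_zy last_rcons eqxx.
Qed.

End Walks.

Section HierarchyLevel.
Variables (V : finType) (e : rel V) (L : {set V}) (pibar : nat).
Local Notation h := (hier_level e L pibar).

Lemma hier_level_le i : h i <= pibar.
Proof. by rewrite /hier_level -minEnat -leEnat bigmin_le_id. Qed.

Lemma hier_level_le_reach i k : k <= pibar -> leader_reach e L i k -> h i <= k.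
Proof.
rewrite -ltnS => lt_k reach_k; rewrite /hier_level -minEnat -leEnat.
exact: (bigmin_le_cond _ (j := Ordinal lt_k)).
Qed.

Lemma leader_reach_hier_level i : h i < pibar -> leader_reach e L i (h i).
Proof.
rewrite /hier_level -minEnat; set P := fun k : 'I_pibar.+1 => leader_reach e L i k.
case: (pickP P) => [k reach_k _|none].
  have [k0 reach_k0 ->] :=
    eq_bigmin k P (fun k : 'I_pibar.+1 => k : nat) reach_k (fun k' _ => ltn_ord k').
  exact: reach_k0.
by rewrite big_pred0 // ltnn.
Qed.

Lemma hier_level_leader i : i \in L -> h i = 0.
Proof.
move=> iL; apply/eqP; rewrite -leqn0; apply: hier_level_le_reach => //.
by apply/existsP; exists i; rewrite iL walk_len0 eqxx.
Qed.

Lemma hier_level_eq0 i : 0 < pibar -> h i = 0 -> i \in L.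
Proof.
move=> pibar_gt0 hi0; have := leader_reach_hier_level (i := i).
rewrite hi0 => /(_ pibar_gt0) /existsP [l /andP [lL]].
by rewrite walk_len0 => /eqP <-.
Qed.

Lemma hier_level_edge j i : e j i -> h i <= (h j).+1.
Proof.
move=> e_ji; case: (ltnP (h j) pibar) => [lt_j|ge_j].
  apply: hier_level_le_reach => //.
  case/existsP: (leader_reach_hier_level lt_j) => l /andP [lL walk_j].
  by apply/existsP; exists l; rewrite lL; apply/walk_lenSP; exists j.
by rewrite (leq_trans (hier_level_le i)) // ltnW.
Qed.

Lemma hier_level_parent i :
  i \notin L -> h i < pibar -> exists2 j, e j i & (h j).+1 = h i.
Proof.
move=> iL lt_i; have := leader_reach_hier_level lt_i.
case hi: (h i) lt_i => [|k] lt_k /existsP [l /andP [lL]].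
  by rewrite walk_len0 => /eqP l_i; rewrite -l_i lL in iL.
case/walk_lenSP=> j walk_j e_ji; exists j => //.
apply/eqP; rewrite eqSS eqn_leq; apply/andP; split; last by rewrite -ltnS -hi hier_level_edge.
by apply: hier_level_le_reach; [lia | apply/existsP; exists l; rewrite lL].
Qed.

End HierarchyLevel.

Section Dynamics.
Variables (V : finType) (L : {set V}) (pibar delta : nat).
Variables (N : nat -> V -> {set V}) (dl : nat -> V -> V -> nat) (pi : nat -> V -> nat).
Hypothesis pibar_gt0 : 0 < pibar.
Hypothesis delay_bound : forall t i j, 1 <= t -> j \in N t i :\ i ->
  dl t j i <= delta /\ dl t j i < t.
Hypothesis pi_leader : forall t l, l \in L -> pi t l = 0.
Hypothesis pi_init : forall i, i \notin L -> pi 0 i = pibar.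
Hypothesis pi_rec : forall t i, i \notin L -> 1 <= t ->
  pi t i = \big[minn/pibar]_(j in N t i :\ i) (pi (t - dl t j i - 1) j).+1.

Lemma pi_le_pibar t i : pi t i <= pibar.
Proof.
case: (boolP (i \in L)) => [/pi_leader -> // | iL].
case: t => [|t]; first by rewrite pi_init.
by rewrite pi_rec // -minEnat -leEnat bigmin_le_id.
Qed.

Lemma pi_follower_gt0 t i : i \notin L -> 0 < pi t i.
Proof.
move=> iL; case: t => [|t]; first by rewrite pi_init.
by rewrite pi_rec // -minEnat -leEnat; apply: le_bigmin.
Qed.

Lemma pi_le_delayed t i j : i \notin L -> 0 < t -> j \in N t i :\ i ->
  pi t i <= (pi (t - dl t j i - 1) j).+1.
Proof. by move=> iL t_gt0 jN; rewrite pi_rec // -minEnat -leEnat bigmin_le_cond. Qed.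

Lemma pi_ge_delayed t i m : i \notin L -> 0 < t -> m <= pibar ->
  (forall j, j \in N t i :\ i -> m <= (pi (t - dl t j i - 1) j).+1) -> m <= pi t i.
Proof. by move=> iL t_gt0 m_le m_le_j; rewrite pi_rec // -minEnat -leEnat le_bigmin. Qed.

Variables (e : rel V) (t0 t1 : nat).
Hypothesis edges_const : forall s, t0 <= s <= t1 -> forall j i, edge_rel N s j i = e j i.
Local Notation h := (hier_level e L pibar).

Lemma in_window_neighbor t i j : t0 <= t <= t1 -> (j \in N t i :\ i) = (j != i) && e j i.
Proof. by move=> win; rewrite !inE -(edges_const win). Qed.

Lemma delayed_in_window d t i j : t0 + delta.+1 * d.+1 <= t <= t1 ->
  j \in N t i :\ i -> t0 + delta.+1 * d <= t - dl t j i - 1 <= t1.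
Proof.
rewrite mulnS => win jN.
have t_gt0 : 0 < t by lia.
have [le_delta _] := delay_bound t_gt0 jN; lia.
Qed.

Lemma pi_ge_window d t i : t0 + delta.+1 * d <= t <= t1 -> minn (h i) d.+1 <= pi t i.
Proof.
elim: d t i => [|d IH] t i win;
  case: (boolP (i \in L)) => [/hier_level_leader -> // | iL].
  exact: leq_trans (geq_minr _ _) (pi_follower_gt0 t iL).
have t_gt0 : 0 < t by move: win; rewrite mulnS; lia.
have win_t : t0 <= t <= t1 by lia.
apply: pi_ge_delayed => //; first by rewrite geq_min hier_level_le.
move=> j jN; have := IH _ j (delayed_in_window win jN).
move: jN; rewrite (in_window_neighbor i j win_t) => /andP [_ e_ji].
have := hier_level_edge L pibar e_ji; lia.
Qed.

Lemma pi_le_window d t i : t0 + delta.+1 * d <= t <= t1 -> h i <= d -> pi t i <= h i.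
Proof.
elim: d t i => [|d IH] t i win hi.
  by rewrite pi_leader //; apply: (hier_level_eq0 (e := e) pibar_gt0); lia.
case: (boolP (i \in L)) => [/pi_leader -> // | iL].
case: (ltnP (h i) pibar) => [lt_i|]; last exact: leq_trans (pi_le_pibar t i).
have t_gt0 : 0 < t by move: win; rewrite mulnS; lia.
have [j e_ji hj] := hier_level_parent iL lt_i.
have win_t : t0 <= t <= t1 by lia.
have jN : j \in N t i :\ i.
  rewrite (in_window_neighbor i j win_t) e_ji andbT.
  by apply/eqP => ji; move: hj; rewrite ji; lia.
apply: leq_trans (pi_le_delayed iL t_gt0 jN) _.
rewrite -hj ltnS; apply: IH (delayed_in_window win jN) _; lia.
Qed.

End Dynamics.

Theorem mainTheorem1
  (V : finType) (L : {set V}) (pibar delta : nat)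
  (N : nat -> V -> {set V})
  (dl : nat -> V -> V -> nat)       (* dl t j i = delay delta^t_{j|i} *)
  (pi : nat -> V -> nat)            (* pi t i = hierarchy level pi_i^t *)
  (D tbar : nat) :
  1 <= pibar ->
  (forall t i, i \in N t i) ->
  (forall t i j, 1 <= t -> j \in N t i :\ i -> dl t j i <= delta /\ dl t j i < t) ->
  (forall t l, l \in L -> pi t l = 0) ->
  (forall i, i \notin L -> pi 0 i = pibar) ->
  (forall t i, i \notin L -> 1 <= t ->
     pi t i = \big[minn/pibar]_(j in N t i :\ i) (pi (t - dl t j i - 1) j).+1) ->
  D <= pibar ->
  (delta.+1 * D <= tbar) ->
  (forall s, tbar - delta.+1 * D <= s <= tbar ->
     forall j i, edge_rel N s j i = edge_rel N tbar j i) ->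
  forall i : V,
    (hier_level (edge_rel N tbar) L pibar i <= D ->
       pi tbar i = hier_level (edge_rel N tbar) L pibar i) /\
    (D < hier_level (edge_rel N tbar) L pibar i -> D < pi tbar i).
Proof.
move=> pibar_gt0 _ delay_bound pi_leader pi_init pi_rec _ le_tbar edges_const i.
have win : tbar - delta.+1 * D + delta.+1 * D <= tbar <= tbar by rewrite subnK ?leqnn.
have ge := pi_ge_window pibar_gt0 delay_bound pi_init pi_rec edges_const i win.
have le := pi_le_window (i := i) pibar_gt0 delay_bound pi_leader pi_init pi_rec edges_const win.
split=> hi; last by lia.
by have := le hi; lia.
Qed.
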